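(* Every $2$-transitive affine permutation group of degree at least $3$ contains a quasi-semiregular element.
   Context: An affine permutation group is a subgroup $G=VG_0\le\mathrm{AGL}(d,q)$ containing the translation group $V=\mathbb F_q^d$, acting on $V$. A permutation $g$ is quasi-semiregular if $\langle g\rangle$ has a unique fixed point and acts semiregularly (only the identity fixes a point) on the remaining points. *)

From mathcomp Require Import all_boot all_order all_algebra all_fingroup all_solvable all_field.
Set Implicit Arguments. Unset Strict Implicit. Unset Printing Implicit Defensive.
Import GRing.Theory.
Local Open Scope ring_scope.

Definition translations (F : finFieldType) (d : nat) : {set {perm 'rV[F]_d}} :=
  [set p : {perm 'rV[F]_d} | [exists v : 'rV[F]_d, [forall x, p x == x + v]]].

Definition AGL (F : finFieldType) (d : nat) : {set {perm 'rV[F]_d}} :=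
  [set p : {perm 'rV[F]_d} | [exists A : 'M[F]_d, exists v : 'rV[F]_d,
      (A \in unitmx) && [forall x, p x == x *m A + v]]].

Definition affine_perm_group (F : finFieldType) (d : nat)
    (G : {group {perm 'rV[F]_d}}) : Prop :=
  translations F d \subset G /\ G \subset AGL F d.

Definition quasi_semiregular (T : finType) (g : {perm T}) : Prop :=
  exists x : T,
    (forall y : T, (forall h, h \in <[g]>%g -> h y = y) <-> y = x) /\
    (forall y : T, y != x -> forall h, h \in <[g]>%g -> h y = y -> h = 1%g).

From mathcomp Require Import all_boot all_order all_algebra all_fingroup all_solvable all_field.
From mathcomp Require Import mxabelem ring zify.
Set Implicit Arguments. Unset Strict Implicit. Unset Printing Implicit Defensive.

(* Let q = #|F|, so that q ^ d >= 3.  A prime r dividing the cyclotomic value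
   Phi_d(q) is such that the r-part of q ^ d - 1 divides no q ^ m - 1 with
   0 < m < d.  The stabiliser G0 of 0 is transitive on the q ^ d - 1 nonzero
   vectors, so the orbits of an r-Sylow subgroup R of G0 on nonzero vectors all
   have size divisible by that r-part.  A nontrivial central element x of R is
   linear, and R permutes the nonzero vectors of its fixed subspace, of size
   q ^ m - 1 with m < d; hence m = 0 and x fixes only 0.  The same holds for
   every nontrivial power of x, which is again central in R. *)

Section Cyclotomic.
Import Order.TTheory GRing.Theory Num.Theory.
Local Open Scope ring_scope.

Lemma Cyclotomic_dvd_Xn_sub1 (d : nat) : (0 < d)%N ->
  exists B : {poly int}, 'X^d - 1 = 'Phi_d * B.
Proof.
move=> d0; rewrite -(prod_Cyclotomic d0) (bigD1_seq d) /=.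
- by eexists.
- by rewrite -dvdn_divisors.
- exact: divisors_uniq.
Qed.

Lemma Xn_sub1_Cyclotomic_dvd (d g : nat) : (0 < d)%N -> (g %| d)%N -> (g < d)%N ->
  exists B : {poly int}, 'X^d - 1 = ('X^g - 1) * ('Phi_d * B).
Proof.
move=> d0 gd gltd.
have g0 : (0 < g)%N by case: g gd gltd => //; rewrite dvd0n => /eqP ->.
rewrite -(prod_Cyclotomic d0) (bigID (fun e => e %| g)%N) /=.
have -> : \prod_(e <- divisors d | (e %| g)%N) 'Phi_e = 'X^g - 1.
  rewrite -(prod_Cyclotomic g0) -big_filter; apply: perm_big.
  apply: uniq_perm; first by rewrite filter_uniq ?divisors_uniq.
    exact: divisors_uniq.
  move=> e; rewrite mem_filter -!dvdn_divisors //.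
  apply/andP/idP => [[]//|eg]; split=> //; exact: dvdn_trans eg gd.
rewrite (big_rem d) /=; last by rewrite -dvdn_divisors.
by rewrite gtnNdvd //; eexists.
Qed.

Lemma horner_Xn_sub1_nat (q n : nat) : (0 < q)%N ->
  ('X^n - 1 : {poly int}).[q%:Z] = Posz (q ^ n - 1)%N.
Proof.
move=> q0; rewrite hornerD hornerN hornerXn hornerC -subzn ?expn_gt0 ?q0 //.
by rewrite -natz -natrX natz.
Qed.

(* |q - w| ^ 2 = (q - 1) ^ 2 + q |w - 1| ^ 2 for |w| = 1. *)
Lemma norm_nat_sub_unitary_gt1 (q : nat) (w : algC) : (2 <= q)%N ->
  w^* * w = 1 -> (w != 1) || (3 <= q)%N -> 1 < `|q%:R - w|.
Proof.
move=> q2 ww h.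
have key : `|q%:R - w| ^+ 2 = (q%:R - 1) ^+ 2 + q%:R * `|w - 1| ^+ 2.
  rewrite !normCK !rmorphB /= conjC_nat conjC1; apply/eqP; rewrite -subr_eq0.
  have -> : (q%:R - w) * (q%:R - w^*) - ((q%:R - 1) ^+ 2 + q%:R * ((w - 1) * (w^* - 1)))
     = (1 - q%:R) * (w^* * w - 1) by ring.
  by rewrite ww subrr mulr0.
rewrite -(@ltr_pXn2r _ 2) ?nnegrE // expr1n key.
case/orP: h => [w1|q3].
  have q1 : 1 <= (q%:R - 1) ^+ 2 :> algC.
    by rewrite exprn_ege1 // lerBrDr (_ : 1 + 1 = 2%:R) // ler_nat.
  apply: (le_lt_trans q1); rewrite ltrDl mulr_gt0 ?exprn_gt0 ?normr_gt0 ?subr_eq0 //.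
  by rewrite ltr0n; apply: leq_trans q2.
have q1 : 1 < (q%:R - 1) ^+ 2 :> algC.
  by rewrite exprn_egt1 // ltrBrDr (_ : 1 + 1 = 2%:R) // ltr_nat.
by apply: (lt_le_trans q1); rewrite lerDl mulr_ge0 ?ler0n ?exprn_ge0.
Qed.

Lemma prodr_gt1 (R : numDomainType) (I : finType) (P : pred I) (E : I -> R) i0 :
  P i0 -> (forall i, P i -> 1 < E i) -> 1 < \prod_(i | P i) E i.
Proof.
move=> Pi0 E_gt1; rewrite (bigD1 i0) //=.
have ge1 : 1 <= \prod_(i | P i && (i != i0)) E i.
  apply: (big_ind (fun x => 1 <= x)) => //; first exact: mulr_ege1.
  by move=> i /andP[Pi _]; apply/ltW/E_gt1.
apply: (lt_le_trans (E_gt1 i0 Pi0)); apply: ler_peMr => //.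
exact: le_trans (ltW (E_gt1 i0 Pi0)).
Qed.

(* Phi_d(q) is the product of the q - w over the primitive d-th roots w. *)
Lemma norm_Cyclotomic_nat_gt1 (q d : nat) : (2 <= q)%N -> (0 < d)%N ->
  (3 <= q ^ d)%N -> (1 < `|('Phi_d).[q%:Z]|)%N.
Proof.
move=> q2 d0 qd3; rewrite -ltz_nat abszE -(ltr_int algC) intr_norm.
have [z zprim] := C_prim_root_exists d0.
have -> : ((('Phi_d).[q%:Z])%:~R : algC) = (map_poly intr 'Phi_d).[q%:R].
  by rewrite -horner_map /= -natz rmorph_nat.
rewrite (Cintr_Cyclotomic zprim) /cyclotomic horner_prod normr_prod.
have i0lt : ((d != 1)%N < d)%N by case: d d0 {zprim qd3} => [|[|]].
apply: (prodr_gt1 (i0 := Ordinal i0lt)).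
  by rewrite /=; case: d d0 {zprim qd3 i0lt} => [|[|]] //= n _; rewrite coprime1n.
move=> i /= ci; rewrite hornerXsubC; apply: norm_nat_sub_unitary_gt1 => //.
  rewrite -normCKC; suff -> : `|z ^+ i| = 1 by rewrite expr1n.
  apply/eqP; have : `|z ^+ i| ^+ d == 1.
    by rewrite -normrX -exprM mulnC exprM (prim_expr_order zprim) expr1n normr1.
  by rewrite pexprn_eq1 // eqn0Ngt d0.
have [d1|dn1] := eqVneq d 1; first by move: qd3; rewrite [in (q ^ d)%N]d1 expn1 => ->; rewrite orbT.
have i0 : (0 < i)%N.
  by case: (nat_of_ord i) ci => //; rewrite /coprime gcd0n => /eqP dd; rewrite dd in dn1.
by rewrite -(prim_order_dvd zprim) gtnNdvd.
Qed.

End Cyclotomic.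

Lemma dvdn_expn_sub1_gcd (N q m n : nat) : 0 < q ->
  N %| q ^ m - 1 -> N %| q ^ n - 1 -> N %| q ^ gcdn m n - 1.
Proof.
move=> q0; elim/ltn_ind: (m + n) {-2}m {-2}n (erefl (m + n)) => s IH {}m {}n esum.
wlog le_mn : m n esum / m <= n.
  move=> W hm hn; case: (leqP m n) => [le|lt]; first exact: W.
  rewrite gcdnC; apply: (W n m) => //; [by rewrite addnC | exact: ltnW].
case: m esum le_mn => [|m] esum le_mn hm hn; first by rewrite gcd0n.
have ->: n = m.+1 + (n - m.+1) by rewrite subnKC.
rewrite gcdnDl; apply: (IH _ _ m.+1 (n - m.+1) erefl hm); first lia.
have e : q ^ n - 1 = q ^ (n - m.+1) * (q ^ m.+1 - 1) + (q ^ (n - m.+1) - 1).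
  rewrite mulnBr muln1 -expnD subnK //.
  have : q ^ (n - m.+1) <= q ^ n by rewrite leq_pexp2l // leq_subr.
  have : 0 < q ^ (n - m.+1) by rewrite expn_gt0 q0.
  move: (q ^ (n - m.+1)) (q ^ n) => a b; lia.
by move: hn; rewrite e dvdn_addr // dvdn_mull.
Qed.

(* Any prime divisor r of Phi_d(q) works: (q ^ g - 1) Phi_d(q) divides q ^ d - 1
   for every proper divisor g of d, and r-parts pass to q ^ gcdn m d - 1. *)
Lemma exists_primitive_prime_part (q d : nat) : 1 < q -> 0 < d -> 3 <= q ^ d ->
  exists2 r, prime r & r %| q ^ d - 1 /\
    forall m, 0 < m < d -> ~~ ((q ^ d - 1)`_r %| q ^ m - 1).
Proof.
move=> q1 d0 qd3; have q0 := ltnW q1.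
set N := (('Phi_d).[q%:Z])%R.
have N1 : 1 < `|N| := norm_Cyclotomic_nat_gt1 q1 d0 qd3.
set r := pdiv `|N|; have rN : r %| `|N| := pdiv_dvd _.
exists r; first exact: pdiv_prime; split.
  have [B eB] := Cyclotomic_dvd_Xn_sub1 d0.
  have := congr1 (fun p : {poly int} => `|(p.[q%:Z])%R|) eB.
  by rewrite /= horner_Xn_sub1_nat // hornerM abszM -/N /= => ->; apply: dvdn_mulr.
move=> m /andP[m0 md]; apply/negP => dvd_m.
set g := gcdn m d.
have gd : g %| d := dvdn_gcdr m d.
have [B eB] := Xn_sub1_Cyclotomic_dvd d0 gd (leq_ltn_trans (dvdn_leq m0 (dvdn_gcdl m d)) md).
have := congr1 (fun p : {poly int} => `|(p.[q%:Z])%R|) eB.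
rewrite /= horner_Xn_sub1_nat // !hornerM horner_Xn_sub1_nat // !abszM -/N /= => e.
have dvd_g : (q ^ d - 1)`_r %| q ^ g - 1.
  by apply: dvdn_expn_sub1_gcd dvd_m _ => //; rewrite p_part pfactor_dvdnn.
have : r * (q ^ d - 1)`_r %| q ^ d - 1.
  by rewrite {2}e mulnC; apply: dvdn_mul => //; apply: dvdn_mulr.
rewrite (p_part r) -expnS pfactor_dvdn ?pdiv_prime ?ltnn // subn_gt0.
exact: leq_trans qd3.
Qed.

Section HallOrbits.
Variables (gT : finGroupType) (sT : finType) (to : {action gT &-> sT}).
Variables (pi : nat_pred) (H R : {group gT}) (S : {set sT}).
Hypotheses (hallR : (pi.-Hall(H) R)%g) (trH : [transitive H, on S | to]).

(* |orbit_R v| |R_v| = |H|_pi = |S|_pi |H_v|_pi, and the pi-group R_v divides |H_v|_pi. *)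
Lemma part_dvdn_card_orbit_Hall v : v \in S -> #|S|`_pi %| #|orbit to R v|.
Proof.
move=> Sv; set Hv := 'C_H[v | to]%g; set Rv := 'C_R[v | to]%g.
have eH : #|S| * #|Hv| = #|H| by rewrite -(atransP trH v Sv) card_orbit_stab.
have eR : #|orbit to R v| * #|Rv| = #|H|`_pi.
  by rewrite card_orbit_stab (card_Hall hallR).
have piRv : (pi.-group Rv)%g := pgroupS (subsetIl _ _) (pHall_pgroup hallR).
have /dvdnP[k eHv] : #|Rv| %| #|Hv|`_pi.
  rewrite -(part_pnat_id piRv) partn_dvd ?cardG_gt0 //.
  by apply: cardSg; apply: setSI; apply: pHall_sub hallR.
move: eR; rewrite -eH partnM ?cardG_gt0 //; last by apply/card_gt0P; exists v.
rewrite eHv mulnA => /eqP; rewrite eqn_pmul2r ?cardG_gt0 // => /eqP ->.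
exact: dvdn_mulr.
Qed.

Lemma part_dvdn_card_acts_Hall (T : {set sT}) :
  T \subset S -> [acts R, on T | to] -> #|S|`_pi %| #|T|.
Proof.
move=> sTS actsT; rewrite -(acts_sum_card_orbit actsT).
apply: dvdn_sum => _ /imsetP[v Tv ->].
exact: part_dvdn_card_orbit_Hall (subsetP sTS v Tv).
Qed.

End HallOrbits.

Lemma quasi_semiregular_of_fixed (T : finType) (g : {perm T}) (x0 : T) :
    g != 1%g -> g x0 = x0 ->
    (forall h y, h \in <[g]>%g -> h != 1%g -> h y = y -> y = x0) ->
  quasi_semiregular g.
Proof.
move=> ntg gx0 fix_x0; exists x0; split=> [y|y ny h gh hy].
  split=> [fix_y | -> h /cycleP[k ->]]; last exact: permX_fix.
  exact: fix_x0 (cycle_id g) ntg (fix_y g (cycle_id g)).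
by apply/eqP; apply: contraNT ny => nth; apply/eqP; apply: fix_x0 gh nth hy.
Qed.

Section Affine.
Import GRing.Theory.
Local Open Scope ring_scope.
Variables (F : finFieldType) (d : nat).
Local Notation V := 'rV[F]_d.

Lemma AGL_fix0_linear (g : {perm V}) : g \in AGL F d -> g 0 = 0 ->
  exists A : 'M[F]_d, forall x, g x = x *m A.
Proof.
rewrite inE => /existsP[A /existsP[v /andP[_ /forallP gE]]] g0.
exists A => x; move: (eqP (gE 0)); rewrite g0 mul0mx add0r => v0.
by rewrite (eqP (gE x)) -v0 addr0.
Qed.

Lemma card_afix_linear (g : {perm V}) (A : 'M[F]_d) : (forall x, g x = x *m A) ->
  exists m, #|('Fix_'P[g])%g| = (#|F| ^ m)%N.
Proof.
move=> gA; exists (\rank (kermx (A - 1%:M))); rewrite -card_rowg; apply: eq_card => y.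
rewrite mem_rowg; apply/afix1P/sub_kermxP => /=; rewrite apermE gA.
  by move=> fix_y; rewrite mulmxBr mulmx1 fix_y subrr.
by move/eqP; rewrite mulmxBr mulmx1 subr_eq0 => /eqP.
Qed.

End Affine.

Section CentralFixedPoints.
Import GRing.Theory.
Local Open Scope ring_scope.
Variables (F : finFieldType) (d : nat) (G R : {group {perm 'rV[F]_d}}) (r : nat).
Local Notation q := #|F|.
Local Notation G0 := 'C_G[0 | 'P]%g.
Hypotheses (sGA : G \subset AGL F d) (trG0 : [transitive G0, on [set~ 0] | 'P]).
Hypothesis sylR : (r.-Sylow(G0) R)%g.
Hypothesis prim_r : forall m, (0 < m < d)%N -> ~~ ((q ^ d - 1)`_r %| q ^ m - 1)%N.

Lemma Sylow_central_fixed_only0 (x : {perm 'rV[F]_d}) y :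
  x \in 'Z(R)%g -> x != 1%g -> x y = y -> y = 0.
Proof.
move=> Zx ntx xy; apply/eqP; apply: contraT => ny.
have /setIP[Gx /astab1P x0] : x \in G0.
  by apply: (subsetP (pHall_sub sylR)); apply: (subsetP (center_sub R)).
have [A xA] := AGL_fix0_linear (subsetP sGA x Gx) x0.
have [m card_fix] := card_afix_linear xA.
set T := [set~ 0] :&: 'Fix_'P[x]%g.
have card_T : #|T| = (q ^ m - 1)%N.
  have fix0 : 0 \in 'Fix_'P[x]%g by apply/afix1P.
  rewrite /T setIC -setDE; have := cardsD1 0 'Fix_'P[x]%g.
  by rewrite card_fix fix0 add1n => ->; rewrite subn1.
have actsT : [acts R, on T | 'P].
  apply: actsI; first exact: subset_trans (pHall_sub sylR) (atrans_acts trG0).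
  rewrite -afix_cycle; apply: (acts_fix_norm 'P); apply: cents_norm.
  by rewrite centsC cycle_subG; case/setIP: Zx.
have m_gt0 : (0 < m)%N.
  have : (0 < #|T|)%N.
    by apply/card_gt0P; exists y; apply/setIP; split; [rewrite !inE | apply/afix1P].
  by rewrite card_T; case: m {card_fix card_T}.
have m_lt_d : (m < d)%N.
  have : 'Fix_'P[x]%g \proper [set: 'rV[F]_d].
    rewrite properT; apply: contra ntx => /eqP fixT; apply/eqP/permP => z.
    by rewrite perm1; have /afix1P : z \in 'Fix_'P[x]%g by rewrite fixT inE.
  by move/proper_card; rewrite card_fix cardsT card_mx mul1n ltn_exp2l ?card_finNzRing_gt1.
have := part_dvdn_card_acts_Hall sylR trG0 (subsetIl _ _) actsT.
by rewrite cardsC1 card_mx mul1n -subn1 card_T (negbTE (prim_r _)) ?m_gt0.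
Qed.

End CentralFixedPoints.

Local Open Scope group_scope.
Theorem theorem4p1 (F : finFieldType) (d : nat) (G : {group {perm 'rV[F]_d}}) :
  affine_perm_group G ->
  (3 <= #|'rV[F]_d|)%N ->
  [transitive^2 G, on [set: 'rV[F]_d] | 'P] ->
  exists2 g, g \in G & quasi_semiregular g.
Proof.
move=> [_ sGA] n3 tr2; rewrite card_mx mul1n in n3.
have d0 : 0 < d by case: d {G sGA tr2} n3.
have [r r_pr [r_dvd prim_r]] := exists_primitive_prime_part (card_finNzRing_gt1 F) d0 n3.
set G0 := 'C_G[0%R | 'P].
have trG0 : [transitive G0, on [set~ 0%R] | 'P].
  by rewrite -setTD; apply: ntransitive1 (stab_ntransitive _ (in_setT _) tr2).
have [R sylR] := Sylow_exists r G0.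
have ntR : R :!=: 1.
  have [v] : exists v : 'rV[F]_d, v \in [set~ 0%R].
    by apply/card_gt0P; rewrite cardsC1 card_mx mul1n ltn_predRL (leq_trans _ n3).
  move/(part_dvdn_card_orbit_Hall sylR trG0)/dvdn_trans/(_ (dvdn_orbit _ _ _)).
  rewrite trivg_card1 cardsC1 card_mx mul1n; apply: contraTneq => ->.
  by rewrite dvdn1 p_part_eq1 negbK mem_primes r_pr -subn1 r_dvd subn_gt0 (leq_trans _ n3).
have [x Zx ntx] : exists2 x, x \in 'Z(R) & x != 1.
  by apply/trivgPn; apply: contra ntR => /eqP/(trivg_center_pgroup (pHall_pgroup sylR)) ->.
have /setIP[Gx /astab1P x0] : x \in G0 by rewrite (subsetP (pHall_sub sylR)) ?(subsetP (center_sub R)).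
exists x => //; apply: quasi_semiregular_of_fixed ntx x0 _ => h y xh nth.
apply: (Sylow_central_fixed_only0 sGA trG0 sylR prim_r) nth.
by rewrite (subsetP _ h xh) // cycle_subG.
Qed.
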